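(* Let $a\in\mathbb{R}$ and $\gamma>0$ be such that \[ P=\tfrac12(1-\gamma^2a^2)+\sqrt{\gamma^2(-1+\gamma^2)+(\gamma^2a^2-1)^2/4} \] is a real number with $P+\gamma^2-1\neq 0$, and set $\hat a=\frac{aP}{P+\gamma^2-1}$, $\hat g=\frac{\gamma^2a}{P+\gamma^2-1}$. Given a real measurement sequence $y$, for $i\in\{-1,1\}$ define \[ \hat x_i(t+1)=\hat a\hat x_i(t)+iu(t)+\hat gy(t),\quad \hat x_i(0)=0, \] \[ l_i(t+1)=l_i(t)-P\hat x_i(t)^2-\gamma^2y(t)^2+\frac{(P\hat x_i(t)+\gamma^2y(t))^2}{P+\gamma^2-1},\quad l_i(0)=0, \] where the control is \[ u(t)=\begin{cases}-(\hat a\hat x_1(t)+\hat gy(t)) & \text{if } l_1(t+1)\ge l_{-1}(t+1),\\ \hat a\hat x_{-1}(t)+\hat gy(t) & \text{if } l_1(t+1)<l_{-1}(t+1).\end{cases} \] Let $\hat x(t+1)=\hat a\hat x(t)+2\hat gy(t)$, $\hat x(0)=0$. Then for all $t\ge 0$: 1. $\hat x_1(t)=0$ and $\hat x_{-1}(t)=\hat x(t)$ if $l_1(t)\ge l_{-1}(t)$, while $\hat x_1(t)=\hat x(t)$ and $\hat x_{-1}(t)=0$ if $l_1(t)<l_{-1}(t)$. 2. If $l_1(t)\ge l_{-1}(t)$ then \[ l_1(t+1)=l_1(t)-\gamma^2y(t)^2+\frac{(\gamma^2y(t))^2}{P+\gamma^2-1},\quad l_{-1}(t+1)=l_{-1}(t)-P\hat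 x(t)^2-\gamma^2y(t)^2+\frac{(P\hat x(t)+\gamma^2y(t))^2}{P+\gamma^2-1}, \] and if $l_1(t)<l_{-1}(t)$ then \[ l_1(t+1)=l_1(t)-P\hat x(t)^2-\gamma^2y(t)^2+\frac{(P\hat x(t)+\gamma^2y(t))^2}{P+\gamma^2-1},\quad l_{-1}(t+1)=l_{-1}(t)-\gamma^2y(t)^2+\frac{(\gamma^2y(t))^2}{P+\gamma^2-1}. \]
   Context: Note that $l_i(t+1)$ depends only on $\hat x_i(t)$ and $y(t)$, so the control $u(t)$ is well defined from $\hat x_{\pm1}(t)$ and $y(t)$. This is the setting of the scalar system $x(t+1)=ax(t)+bu(t)+w(t)$, $y(t)=x(t)+v(t)$ with unknown input sign $b\in\{-1,1\}$, where $\hat x_i,l_i$ are the observer and cumulative cost for the model $b=i$. *)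

From Stdlib Require Import Reals.
Open Scope R_scope.

(* Riccati-type constant P (real when the radicand is nonnegative). *)
Definition radicand (a gamma : R) : R :=
  gamma^2 * (-1 + gamma^2) + (gamma^2 * a^2 - 1)^2 / 4.

Definition Pc (a gamma : R) : R :=
  (1/2) * (1 - gamma^2 * a^2) + sqrt (radicand a gamma).

Definition den (a gamma : R) : R := Pc a gamma + gamma^2 - 1.

Definition ahat (a gamma : R) : R := a * Pc a gamma / den a gamma.
Definition ghat (a gamma : R) : R := gamma^2 * a / den a gamma.

Definition lstep (a gamma l xh yt : R) : R :=
  l - Pc a gamma * xh^2 - gamma^2 * yt^2
    + (Pc a gamma * xh + gamma^2 * yt)^2 / den a gamma.

Record st := mkst { x1 : R; xm1 : R; l1 : R; lm1 : R }.

(* The control u(t), well defined from xhat_{+-1}(t), l_{+-1}(t), y(t). *)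
Definition control (a gamma : R) (s : st) (yt : R) : R :=
  if Rle_dec (lstep a gamma (lm1 s) (xm1 s) yt) (lstep a gamma (l1 s) (x1 s) yt)
  then - (ahat a gamma * x1 s + ghat a gamma * yt)
  else ahat a gamma * xm1 s + ghat a gamma * yt.

Definition step (a gamma : R) (s : st) (yt : R) : st :=
  let u := control a gamma s yt in
  mkst (ahat a gamma * x1 s + 1 * u + ghat a gamma * yt)
       (ahat a gamma * xm1 s + (-1) * u + ghat a gamma * yt)
       (lstep a gamma (l1 s) (x1 s) yt)
       (lstep a gamma (lm1 s) (xm1 s) yt).

Fixpoint state (a gamma : R) (y : nat -> R) (t : nat) : st :=
  match t with
  | O => mkst 0 0 0 0
  | S t' => step a gamma (state a gamma y t') (y t')
  end.

Fixpoint xhat (a gamma : R) (y : nat -> R) (t : nat) : R :=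
  match t with
  | O => 0
  | S t' => ahat a gamma * xhat a gamma y t' + 2 * ghat a gamma * y t'
  end.

From Stdlib Require Import Reals Lra.
Open Scope R_scope.

(* The control always zeroes the observer of the model that will be leading
   after the step (the one with the larger cost l), while [u] cancels in the
   sum of the two observers, which therefore follows the recursion of
   [xhat].  With one observer at 0, its cost update loses its [xhat] terms. *)

Lemma lstep_x0 (a gamma l yt : R) :
  lstep a gamma l 0 yt = l - gamma^2 * yt^2 + (gamma^2 * yt)^2 / den a gamma.
Proof. unfold lstep, Rdiv; ring. Qed.

Lemma step_xsum (a gamma : R) (s : st) (yt : R) :
  x1 (step a gamma s yt) + xm1 (step a gamma s yt)
  = ahat a gamma * (x1 s + xm1 s) + 2 * ghat a gamma * yt.
Proof. simpl; ring. Qed.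

Lemma step_x1_eq0 (a gamma : R) (s : st) (yt : R) :
  l1 (step a gamma s yt) >= lm1 (step a gamma s yt) -> x1 (step a gamma s yt) = 0.
Proof.
  unfold step, control; simpl; intros Hge.
  destruct (Rle_dec _ _); [ring | lra].
Qed.

Lemma step_xm1_eq0 (a gamma : R) (s : st) (yt : R) :
  l1 (step a gamma s yt) < lm1 (step a gamma s yt) -> xm1 (step a gamma s yt) = 0.
Proof.
  unfold step, control; simpl; intros Hlt.
  destruct (Rle_dec _ _); [lra | ring].
Qed.

Lemma state_xsum (a gamma : R) (y : nat -> R) (t : nat) :
  x1 (state a gamma y t) + xm1 (state a gamma y t) = xhat a gamma y t.
Proof.
  induction t as [|t IH]; [simpl; ring|].
  change (state a gamma y (S t)) with (step a gamma (state a gamma y t) (y t)).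
  rewrite step_xsum, IH; reflexivity.
Qed.

Lemma state_x1_eq0 (a gamma : R) (y : nat -> R) (t : nat) :
  l1 (state a gamma y t) >= lm1 (state a gamma y t) -> x1 (state a gamma y t) = 0.
Proof. destruct t as [|t]; [reflexivity | apply step_x1_eq0]. Qed.

Lemma state_xm1_eq0 (a gamma : R) (y : nat -> R) (t : nat) :
  l1 (state a gamma y t) < lm1 (state a gamma y t) -> xm1 (state a gamma y t) = 0.
Proof. destruct t as [|t]; [simpl; lra | apply step_xm1_eq0]. Qed.

Theorem proposition4 (a gamma : R) (y : nat -> R) :
  0 < gamma ->
  0 <= radicand a gamma ->
  Pc a gamma + gamma^2 - 1 <> 0 ->
  forall t : nat,
    let s := state a gamma y t in
    let s' := state a gamma y (S t) in
    let P := Pc a gamma in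
    let xh := xhat a gamma y t in
    (l1 s >= lm1 s ->
       x1 s = 0 /\ xm1 s = xh /\
       l1 s' = l1 s - gamma^2 * (y t)^2 + (gamma^2 * y t)^2 / (P + gamma^2 - 1) /\
       lm1 s' = lm1 s - P * xh^2 - gamma^2 * (y t)^2
                + (P * xh + gamma^2 * y t)^2 / (P + gamma^2 - 1)) /\
    (l1 s < lm1 s ->
       x1 s = xh /\ xm1 s = 0 /\
       l1 s' = l1 s - P * xh^2 - gamma^2 * (y t)^2
                + (P * xh + gamma^2 * y t)^2 / (P + gamma^2 - 1) /\
       lm1 s' = lm1 s - gamma^2 * (y t)^2 + (gamma^2 * y t)^2 / (P + gamma^2 - 1)).
Proof.
  (* The identities are purely algebraic (division is total). *)
  intros _ _ _ t s s' P xh.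
  pose proof (state_xsum a gamma y t) as Hsum; fold s xh in Hsum.
  change (l1 s') with (lstep a gamma (l1 s) (x1 s) (y t)).
  change (lm1 s') with (lstep a gamma (lm1 s) (xm1 s) (y t)).
  split; intros Hcmp.
  - assert (Hx1 : x1 s = 0) by exact (state_x1_eq0 a gamma y t Hcmp).
    assert (Hxm1 : xm1 s = xh) by lra.
    rewrite Hx1, Hxm1, lstep_x0; repeat split; assumption || reflexivity.
  - assert (Hxm1 : xm1 s = 0) by exact (state_xm1_eq0 a gamma y t Hcmp).
    assert (Hx1 : x1 s = xh) by lra.
    rewrite Hx1, Hxm1, lstep_x0; repeat split; assumption || reflexivity.
Qed.
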